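(* Consider the family of NSG-compositions $x_1+\cdots+x_{m-1}$ with maximum $5$ whose last maximal part $x_l=5$ (i.e. $x_l=5$ and $x_i<5$ for $i>l$) satisfies $3l\ge m-1$. Its growth-rate is at most $1/\rho$, where $\rho=0.6189\ldots>\omega^{-1}$ is the positive root of $1-I_5I_4^2$, with $I_4=3q^4+4q^5+3q^6+2q^7+q^8$ and $I_5=4q^5+5q^6+4q^7+3q^8+2q^9+q^{10}$. In particular this growth-rate is strictly smaller than $\omega=\frac{1+\sqrt5}2$.
   Context: An NSG-composition is a composition $x_1+\cdots+x_{m-1}$ of positive integers satisfying $x_{s+t}\le x_s+x_t$ and $x_{m-s-t}\le x_{m-s}+x_{m-t}+1$ for all $s,t\ge1$, $s+t<m$ (equivalently, the Kunz vector of a numerical semigroup of multiplicity $m$); its genus is $\sum x_j$. The growth-rate of a family is $\limsup_{g\to\infty}a_g^{1/g}$ with $a_g$ the number of members of genus $g$. *)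

From HB Require Import structures.
From mathcomp Require Import all_boot all_order all_algebra.
From mathcomp Require Import all_classical all_reals all_analysis.
Set Implicit Arguments. Unset Strict Implicit. Unset Printing Implicit Defensive.
Import Order.TTheory GRing.Theory Num.Theory.

(* A composition x_1 + ... + x_{m-1} is represented by the list
   s = [:: x_1; ...; x_{m-1}], so m - 1 = size s and x_j = nth 0 s j.-1. *)
Definition part (s : seq nat) (j : nat) : nat := nth 0 s j.-1.

Definition is_NSG_composition (x : seq nat) : Prop :=
  let n := size x in
  (0 < n)%N /\
  (forall j, (1 <= j <= n)%N -> (0 < part x j)%N) /\
  (forall s t, (1 <= s)%N -> (1 <= t)%N -> (s + t <= n)%N ->
     (part x (s + t) <= part x s + part x t)%N /\
     (part x (n.+1 - s - t) <= part x (n.+1 - s) + part x (n.+1 - t) + 1)%N).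

Definition genus (x : seq nat) : nat := sumn x.

Definition in_family (x : seq nat) : Prop :=
  is_NSG_composition x /\
  (forall j, (1 <= j <= size x)%N -> (part x j <= 5)%N) /\
  exists l, [/\ (1 <= l <= size x)%N, part x l = 5%N,
     (forall i, (l < i <= size x)%N -> (part x i < 5)%N) &
     (size x <= 3 * l)%N].

(* Every composition of
   genus g has at most g parts, each at most g, so it is enumerated exactly
   once among the k-tuples over 'I_g.+1 with k <= g. *)
Definition a_count (g : nat) : nat :=
  \sum_(k < g.+1)
    #|[set t : k.-tuple 'I_g.+1 |
        `[< in_family (map val t) /\ genus (map val t) = g >] ]|.

Local Open Scope ring_scope.

Definition growth_rate (R : realType) : \bar R :=
  limn_esup (fun g : nat => ((a_count g)%:R `^ (g%:R^-1) : R)%:E).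

Definition I4 (R : realType) (q : R) : R :=
  3 * q ^+ 4 + 4 * q ^+ 5 + 3 * q ^+ 6 + 2 * q ^+ 7 + q ^+ 8.

Definition I5 (R : realType) (q : R) : R :=
  4 * q ^+ 5 + 5 * q ^+ 6 + 4 * q ^+ 7 + 3 * q ^+ 8 + 2 * q ^+ 9 + q ^+ 10.

(* Write such a composition x (with k = m - 1 parts) as x = y ++ 5 :: z, where
   5 = x_l is the last part equal to 5.  The inequalities x_l <= x_i + x_{l-i}
   say that y (entries in 1..5, length l - 1) is "5-paired":
   y_i + y_{l-i} >= 5; the inequalities x_l <= x_{m-s} + x_{m-t} + 1 say that
   z (entries in 1..4, length k - l) is "4-paired".  Peeling off the outer pair
   of a paired sequence shows that its generating function sum q^(sum y) grows
   like I_c(q)^(L/2), where I_5 and I_4 are the polynomials of the statement.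
   Since 3 l >= k, the length of z is at most about twice that of y, so each
   position l contributes at most a constant times (I_5 I_4^2)^((l-1)/2), which
   is bounded when I_5(q) I_4(q)^2 <= 1 and I_4(q) >= 1.  Summing over l and k gives
   a_g q^g <= C (g + 1)^2 for q = rho, hence limsup a_g^(1/g) <= 1/rho.
   Finally 1/omega < rho because I_5 I_4^2 is increasing and, reducing modulo
   w^2 + w - 1, equals 4080 - 6600 w < 1 at w = 1/omega. *)

From HB Require Import structures.
From mathcomp Require Import all_boot all_order all_algebra.
From mathcomp Require Import all_classical all_reals all_analysis.
From mathcomp Require Import zify ring lra.
Import Order.TTheory GRing.Theory Num.Theory.

(* All sequences of length L with entries in 1..M, listed from the outside in:
   a sequence of length L + 2 is a :: y ++ [:: b] with y of length L. *)
Fixpoint pair_seqs (M L : nat) : seq (seq nat) :=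
  match L with
  | 0 => [:: [::]]
  | 1 => [seq [:: a] | a <- iota 1 M]
  | L'.+2 => flatten [seq [seq a :: rcons y b | b <- iota 1 M, y <- pair_seqs M L']
                     | a <- iota 1 M]
  end.

Lemma mem_pair_seqs M y :
  all (fun a => 0 < a <= M) y -> y \in pair_seqs M (size y).
Proof.
move: {2}(size y) (erefl (size y)) => L.
elim/ltn_ind: L y => -[|[|L]] IH y.
- by case: y.
- case: y => [|a [|]] //= _ /andP[aM _]; apply: map_f; rewrite mem_iota; lia.
- case: y => [|a y] //= [sy] /andP[aM].
  case/lastP: y sy => [|y b] //; rewrite size_rcons => -[sy].
  rewrite all_rcons => /andP[bM yM].
  apply/flatten_mapP; exists a; first by rewrite mem_iota; lia.
  apply: allpairs_f; first by rewrite mem_iota; lia.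
  by apply: (IH L _ y sy yM); lia.
Qed.

Definition paired (c : nat) (y : seq nat) : bool :=
  all (fun p => c <= p.1 + p.2) (zip y (rev y)).

Lemma pairedP c y :
  reflect (forall i, i < size y -> c <= nth 0 y i + nth 0 y (size y - i.+1))
          (paired c y).
Proof.
apply: (iffP (all_nthP (0, 0))); rewrite size_zip size_rev minnn => H i lti;
  by have := H i lti; rewrite nth_zip ?size_rev //= nth_rev.
Qed.

Lemma paired_wrap c a b y :
  paired c (a :: rcons y b) = (c <= a + b) && paired c y.
Proof.
rewrite /paired rev_cons rev_rcons /= zip_rcons ?size_rev //.
by rewrite all_rcons /= addnC andbA andbb.
Qed.

(* The subadditivity x_l <= x_i + x_{l-i} makes the parts before position l
   x_l-paired. *)
Lemma nsg_prefix_paired x l : is_NSG_composition x -> 1 <= l <= size x ->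
  paired (part x l) (take l.-1 x).
Proof.
move=> [_ [_ nsg]] /andP[l_ge1 l_le]; apply/pairedP => i.
rewrite size_takel => [lt_il|]; last lia.
rewrite !nth_take; [|lia|lia].
have [+ _] := nsg i.+1 (l.-1 - i) isT ltac:(lia) ltac:(lia).
have -> : i.+1 + (l.-1 - i) = l by lia.
by rewrite /part /=; have -> : (l.-1 - i).-1 = l.-1 - i.+1 by lia.
Qed.

(* The dual inequality x_l <= x_{m-s} + x_{m-t} + 1 makes the parts after
   position l (x_l - 1)-paired. *)
Lemma nsg_suffix_paired x l : is_NSG_composition x -> 1 <= l <= size x ->
  paired (part x l).-1 (drop l x).
Proof.
move=> [_ [_ nsg]] /andP[l_ge1 l_le]; apply/pairedP => i.
rewrite size_drop => lt_i; rewrite !nth_drop.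
have [_ +] := nsg (size x - l - i) i.+1 ltac:(lia) isT ltac:(lia).
have -> : (size x).+1 - (size x - l - i) - i.+1 = l by lia.
rewrite /part.
have -> : ((size x).+1 - (size x - l - i)).-1 = l + i by lia.
have -> : ((size x).+1 - i.+1).-1 = l + (size x - l - i.+1) by lia.
lia.
Qed.

Definition family_candidates (k : nat) : seq (seq nat) :=
  flatten [seq [seq y ++ 5 :: z | y <- [seq u <- pair_seqs 5 l.-1 | paired 5 u],
                                  z <- [seq u <- pair_seqs 4 (k - l) | paired 4 u]]
          | l <- [seq l <- index_iota 1 k.+1 | k <= 3 * l]].

Lemma family_in_candidates {x : seq nat} : in_family x -> x \in family_candidates (size x).
Proof.
move=> [nsg [le5 [l [/andP[l_ge1 l_le] xl5 lt5 l3]]]].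
have [_ [pos _]] := nsg.
have split_x : x = take l.-1 x ++ 5 :: drop l x.
  rewrite -{1}(cat_take_drop l.-1 x) (drop_nth 0); last lia.
  by rewrite prednK // -xl5.
apply/flatten_mapP; exists l; first by rewrite mem_filter l3 mem_index_iota; lia.
rewrite {1}split_x; apply: allpairs_f; rewrite mem_filter.
- rewrite -{1}xl5 nsg_prefix_paired ?l_ge1 //=.
  have size_y : size (take l.-1 x) = l.-1 by rewrite size_takel //; lia.
  rewrite -[in pair_seqs _ _]size_y; apply: mem_pair_seqs; apply/(all_nthP 0) => i.
  rewrite size_y => lt_i; rewrite nth_take //.
  have := pos i.+1 ltac:(lia); have := le5 i.+1 ltac:(lia).
  by rewrite /part /= => -> ->.
- rewrite (_ : 4 = (part x l).-1) ?nsg_suffix_paired ?l_ge1 ?xl5 //=.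
  rewrite -(size_drop l x); apply: mem_pair_seqs; apply/(all_nthP 0) => i.
  rewrite size_drop nth_drop => lt_i.
  have := pos (l + i).+1 ltac:(lia); have := lt5 (l + i).+1 ltac:(lia).
  by rewrite /part /=; lia.
Qed.

Local Open Scope ring_scope.

Section GeneratingFunctions.
Context {R : comPzSemiRingType}.

Definition part_poly (M : nat) (q : R) : R := \sum_(a <- iota 1 M) q ^+ a.

Definition pair_poly (c M : nat) (q : R) : R :=
  \sum_(a <- iota 1 M) \sum_(b <- iota 1 M)
    (if (c <= a + b)%N then q ^+ (a + b) else 0).

Definition paired_gf (c M L : nat) (q : R) : R :=
  \sum_(y <- pair_seqs M L | paired c y) q ^+ sumn y.

Lemma paired_gf0 c M q : paired_gf c M 0 q = 1.
Proof. by rewrite /paired_gf big_cons big_nil /= addr0. Qed.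

Lemma paired_gf_wrap c M L q :
  paired_gf c M L.+2 q = pair_poly c M q * paired_gf c M L q.
Proof.
rewrite /paired_gf big_mkcond /= big_flatten big_map /pair_poly big_distrl /=.
apply: eq_bigr => a _; rewrite big_allpairs_dep big_distrl /=.
apply: eq_bigr => b _; rewrite [in RHS]big_mkcond big_distrr /=.
apply: eq_bigr => y _; rewrite paired_wrap sumn_rcons.
case: (c <= a + b)%N; rewrite /= ?mul0r //.
by case: (paired c y); rewrite ?mulr0 // -exprD; congr (_ ^+ _); lia.
Qed.

Lemma candidates_gf k q :
  \sum_(u <- family_candidates k) q ^+ sumn u =
  \sum_(1 <= l < k.+1 | (k <= 3 * l)%N)
     q ^+ 5 * paired_gf 5 5 l.-1 q * paired_gf 4 4 (k - l) q.
Proof.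
rewrite /family_candidates big_flatten big_map big_filter; apply: eq_bigr => l _.
rewrite big_allpairs_dep /paired_gf big_filter -mulrA big_distrl big_distrr /=.
apply: eq_bigr => y _; rewrite big_filter mulrCA !big_distrr /=.
by apply: eq_bigr => z _; rewrite sumn_cat /= -!exprD; congr (_ ^+ _); lia.
Qed.

End GeneratingFunctions.

Lemma pair_poly_5_5 {R : realType} (q : R) : pair_poly 5 5 q = I5 q.
Proof. by rewrite /pair_poly /I5 /= !big_cons !big_nil /=; ring. Qed.

Lemma pair_poly_4_4 {R : realType} (q : R) : pair_poly 4 4 q = I4 q.
Proof. by rewrite /pair_poly /I4 /= !big_cons !big_nil /=; ring. Qed.

Section GeneratingFunctionBounds.
Context {R : numDomainType} {q : R}.
Hypothesis q_ge0 : 0 <= q.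

Lemma part_poly_ge0 M : 0 <= part_poly M q.
Proof. by apply: sumr_ge0 => a _; rewrite exprn_ge0. Qed.

Lemma pair_poly_ge0 c M : 0 <= pair_poly c M q.
Proof.
apply: sumr_ge0 => a _; apply: sumr_ge0 => b _.
by case: ifP => // _; rewrite exprn_ge0.
Qed.

Lemma paired_gf_ge0 c M L : 0 <= paired_gf c M L q.
Proof. by apply: sumr_ge0 => y _; rewrite exprn_ge0. Qed.

Lemma paired_gf1_le c M : paired_gf c M 1 q <= part_poly M q.
Proof.
rewrite /paired_gf /part_poly big_map big_mkcond /=.
by apply: ler_sum => a _; case: ifP => _; rewrite ?addn0 ?exprn_ge0.
Qed.

(* Peeling off outer pairs: paired_gf c M L q <= (1 + q + ... + q^M) I_c^(L/2). *)
Lemma paired_gf_bound c M L :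
  paired_gf c M L q <= (1 + part_poly M q) * pair_poly c M q ^+ L./2.
Proof.
elim/ltn_ind: L => -[|[|L]] IH.
- by rewrite paired_gf0 expr0 mulr1 lerDl part_poly_ge0.
- by rewrite expr0 mulr1 (le_trans (paired_gf1_le c M)) // lerDr.
- rewrite paired_gf_wrap /= exprS mulrCA.
  by apply: ler_wpM2l; [exact: pair_poly_ge0 | exact: IH].
Qed.

End GeneratingFunctionBounds.

(* If a b^2 <= 1 with b >= 1, then a^p b^j stays below b^2 for j <= 2p + 2:
   this is where the hypothesis 3 l >= m - 1 is used. *)
Lemma pow_pair_bound {R : numDomainType} (a b : R) p j :
  0 <= a -> 1 <= b -> a * b ^+ 2 <= 1 -> (j <= p.*2.+2)%N ->
  a ^+ p * b ^+ j <= b ^+ 2.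
Proof.
move=> a_ge0 b_ge1 ab_le1 j_le.
have b_ge0 : 0 <= b := le_trans ler01 b_ge1.
apply: le_trans (_ : a ^+ p * b ^+ p.*2.+2 <= _).
  by apply: ler_wpM2l; rewrite ?exprn_ge0 // ler_weXn2l.
rewrite -addn2 exprD mulrA -mul2n exprM -exprMn.
by apply: ler_piMl; rewrite ?exprn_ge0 ?exprn_ile1 // mulr_ge0 ?exprn_ge0.
Qed.

Lemma ler_sum_uniq_subseq {I : eqType} {R : numDomainType} (F : I -> R) (r s : seq I) :
  uniq r -> {subset r <= s} -> (forall i, 0 <= F i) ->
  \sum_(i <- r) F i <= \sum_(i <- s) F i.
Proof.
move=> + + F_ge0; elim: r s => [|i r IH] s; first by rewrite big_nil sumr_ge0.
move=> /= /andP[i_r r_uniq] sub_rs.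
have i_s : i \in s by apply: sub_rs; rewrite inE eqxx.
rewrite (perm_big _ (perm_to_rem i_s)) !big_cons lerD2l; apply: IH => // j j_r.
have j_s : j \in s by apply: sub_rs; rewrite inE j_r orbT.
have j_neq_i : j != i by apply: contraNneq i_r => <-.
by rewrite (perm_mem (perm_to_rem i_s)) inE (negbTE j_neq_i) in j_s.
Qed.

Section FamilyCountBound.
Context {R : numDomainType} {q : R}.
Hypotheses (q_ge0 : 0 <= q) (P4_ge1 : 1 <= pair_poly 4 4 q)
  (P5P4_le1 : pair_poly 5 5 q * pair_poly 4 4 q ^+ 2 <= 1).

Definition family_const : R :=
  q ^+ 5 * (1 + part_poly 5 q) * (1 + part_poly 4 q) * pair_poly 4 4 q ^+ 2.

Lemma family_const_ge0 : 0 <= family_const.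
Proof.
have P4_ge0 : 0 <= pair_poly 4 4 q := le_trans ler01 P4_ge1.
by rewrite !mulr_ge0 ?addr_ge0 ?exprn_ge0 ?part_poly_ge0.
Qed.

(* Position l of the last 5 contributes at most family_const: the exponents
   of I_5 and I_4 are (l - 1)/2 and (k - l)/2, and k - l <= 2 l. *)
Lemma candidate_term_bound k l : (1 <= l)%N -> (k <= 3 * l)%N ->
  q ^+ 5 * paired_gf 5 5 l.-1 q * paired_gf 4 4 (k - l) q <= family_const.
Proof.
move=> l_ge1 k_le.
have S5 := part_poly_ge0 q_ge0 5; have S4 := part_poly_ge0 q_ge0 4.
apply: le_trans (_ : q ^+ 5 * ((1 + part_poly 5 q) * pair_poly 5 5 q ^+ l.-1./2)
    * ((1 + part_poly 4 q) * pair_poly 4 4 q ^+ (k - l)./2) <= _).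
  apply: ler_pM; rewrite ?mulr_ge0 ?exprn_ge0 ?paired_gf_ge0 ?paired_gf_bound //.
  by apply: ler_wpM2l; rewrite ?exprn_ge0 ?paired_gf_bound.
rewrite /family_const; set A := 1 + part_poly 5 q; set B := 1 + part_poly 4 q.
rewrite [X in X <= _](_ : _ = q ^+ 5 * A * B *
  (pair_poly 5 5 q ^+ l.-1./2 * pair_poly 4 4 q ^+ (k - l)./2)); last by ring.
apply: ler_wpM2l; first by rewrite !mulr_ge0 ?exprn_ge0 ?addr_ge0.
apply: pow_pair_bound; rewrite ?pair_poly_ge0 //.
have := leq_half_double l.-1; have := leq_half_double (k - l); lia.
Qed.

Lemma family_gf_bound k :
  \sum_(u <- family_candidates k) q ^+ sumn u <= k%:R * family_const.
Proof.
rewrite candidates_gf big_mkcond /=.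
apply: le_trans (_ : \sum_(1 <= l < k.+1) family_const <= _); last first.
  by rewrite sumr_const_nat subn1 mulr_natl.
apply: ler_sum_nat => l /andP[l_ge1 _].
by case: ifP => [k_le|_]; [exact: candidate_term_bound | exact: family_const_ge0].
Qed.

Lemma family_tuples_bound g k :
  #|[set t : k.-tuple 'I_g.+1 |
      `[< in_family (map val t) /\ genus (map val t) = g >] ]|%:R * q ^+ g
    <= k%:R * family_const.
Proof.
set A := [set t | _]; apply: le_trans (family_gf_bound k).
have -> : #|A|%:R * q ^+ g =
    \sum_(u <- map (fun t : k.-tuple 'I_g.+1 => map val t) (enum A)) q ^+ sumn u.
  rewrite big_map big_enum /= -sumr_const mulr_suml; apply: eq_bigr => t.
  rewrite inE mul1r => /asboolP[_ genus_t].
  by congr (_ ^+ _); exact: esym genus_t.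
apply: ler_sum_uniq_subseq => [|u|u]; last exact: exprn_ge0.
  rewrite map_inj_uniq ?enum_uniq // => t1 t2 /(inj_map val_inj).
  exact: val_inj.
case/mapP => t; rewrite mem_enum inE => /asboolP[fam_t _] ->.
by have := family_in_candidates fam_t; rewrite size_map size_tuple.
Qed.

Lemma a_count_bound g :
  (a_count g)%:R * q ^+ g <= g.+1%:R ^+ 2 * family_const.
Proof.
rewrite /a_count natr_sum mulr_suml.
apply: le_trans (_ : \sum_(k < g.+1) g.+1%:R * family_const <= _); last first.
  by rewrite sumr_const card_ord expr2 -mulrA [leRHS]mulr_natl.
apply: ler_sum => k _; apply: le_trans (family_tuples_bound g k) _.
by apply: ler_wpM2r; rewrite ?family_const_ge0 // ler_nat ltnW.
Qed.

End FamilyCountBound.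

Lemma bernoulli_ineq {R : realDomainType} {x : R} n :
  0 <= x -> 1 + n%:R * x <= (1 + x) ^+ n.
Proof.
move=> x_ge0; elim: n => [|n IH]; first by rewrite expr0 mul0r addr0.
have nx_ge0 : 0 <= n%:R * x by rewrite mulr_ge0.
rewrite exprS -addn1 natrD mulrDl mul1r; nra.
Qed.

Lemma cube_le_exp {R : realFieldType} {d : R} : 0 < d ->
  exists2 x : R, 0 < x & forall n, (n%:R * x) ^+ 3 <= (1 + d) ^+ n.
Proof.
move=> d_gt0.
have [x [x_gt0 x_le1 x7_le]] : exists x : R, [/\ 0 < x, x <= 1 & 7 * x <= d].
  by case: (lerP d 1) => d1; [exists (d / 7) | exists (1 / 7)]; split; lra.
have cube_le : (1 + x) ^+ 3 <= 1 + d.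
  have -> : (1 + x) ^+ 3 = 1 + 3 * x + 3 * (x * x) + x * x * x by ring.
  nra.
exists x => // n.
have nx_le : n%:R * x <= (1 + x) ^+ n.
  by have := bernoulli_ineq n (ltW x_gt0); lra.
apply: le_trans (_ : ((1 + x) ^+ 3) ^+ n <= _); last first.
  by apply: lerXn2r; rewrite // nnegrE ?exprn_ge0 // addr_ge0 // ltW.
rewrite -exprM mulnC exprM; apply: lerXn2r => //; rewrite nnegrE.
  by rewrite mulr_ge0 // ltW.
by rewrite exprn_ge0 // addr_ge0 // ltW.
Qed.

Lemma quadratic_le_exp {R : archiRealFieldType} (C : R) {d : R} : 0 < d ->
  exists N, forall n, (N <= n)%N -> C * n.+1%:R ^+ 2 <= (1 + d) ^+ n.
Proof.
move=> d_gt0; have [x x_gt0 cube_le] := cube_le_exp d_gt0.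
have x3_gt0 : 0 < x ^+ 3 by rewrite exprn_gt0.
pose B := 4 * `|C| / x ^+ 3.
have B_ge0 : 0 <= B by rewrite divr_ge0 ?mulr_ge0 // ltW.
exists (Num.Def.archi_bound B).+1 => n n_ge; apply: le_trans (cube_le n).
have n_ge1 : 1 <= n%:R :> R by rewrite ler1n; lia.
have CB : 4 * `|C| <= n%:R * x ^+ 3.
  rewrite -ler_pdivrMr //; apply: ltW; apply: lt_le_trans (archi_boundP B_ge0) _.
  by rewrite ler_nat; lia.
rewrite -natr1; set m : R := n%:R.
apply: le_trans (_ : `|C| * (4 * m ^+ 2) <= _).
  apply: le_trans (_ : `|C| * (m + 1) ^+ 2 <= _).
    by apply: ler_wpM2r; rewrite ?exprn_ge0 ?real_ler_norm ?num_real //; lra.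
  by apply: ler_wpM2l => //; rewrite !expr2; nra.
have -> : `|C| * (4 * m ^+ 2) = 4 * `|C| * m ^+ 2 by ring.
have -> : (m * x) ^+ 3 = m * x ^+ 3 * m ^+ 2 by ring.
by apply: ler_wpM2r CB; rewrite exprn_ge0 ?ler0n.
Qed.

Lemma root_le {R : realType} (x y : R) n : (0 < n)%N -> 0 <= x -> 0 <= y ->
  x <= y ^+ n -> x `^ n%:R^-1 <= y.
Proof.
move=> n_gt0 x_ge0 y_ge0 x_le.
have n_neq0 : n%:R != 0 :> R by rewrite pnatr_eq0 -lt0n.
have inv_ge0 : 0 <= n%:R^-1 :> R by rewrite invr_ge0 ler0n.
have := ge0_ler_powR inv_ge0 (x := x) (y := y ^+ n).
rewrite !nnegrE x_ge0 exprn_ge0 // => /(_ isT isT x_le).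
by rewrite -powR_mulrn // -powRrM mulfV // powRr1.
Qed.

Lemma limn_esup_le_eventually {R : realType} (u : (\bar R)^nat) (l : \bar R) :
  (exists N, forall n, (N <= n)%N -> (u n <= l)%E) -> (limn_esup u <= l)%E.
Proof.
move=> [N u_le]; rewrite limn_esup_lim; apply: lime_le; first exact: is_cvg_esups.
exists N => // n /= N_le; apply: ge_ereal_sup => _ [m /= n_le <-].
by apply: u_le; rewrite /= (leq_trans N_le).
Qed.

Lemma limn_esup_root_le {R : realType} (a : nat -> nat) (r C : R) : 0 < r ->
  (forall g, (a g)%:R * r ^+ g <= g.+1%:R ^+ 2 * C) ->
  (limn_esup (fun g => ((a g)%:R `^ g%:R^-1)%:E) <= (r^-1)%:E)%E.
Proof.
move=> r_gt0 a_le; apply/lee_addgt0Pr => e e_gt0.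
have [N quad_le] := quadratic_le_exp C (mulr_gt0 e_gt0 r_gt0).
apply: limn_esup_le_eventually; exists N.+1 => g N_lt.
have y_gt0 : 0 < r^-1 + e by rewrite addr_gt0 ?invr_gt0.
rewrite lee_fin; apply: root_le; [lia | exact: ler0n | exact: ltW |].
rewrite -(ler_pM2r (exprn_gt0 g r_gt0)) -exprMn mulrDl mulVf ?gt_eqF //.
by apply: le_trans (a_le g) _; rewrite mulrC quad_le // ltnW.
Qed.

Definition inv_golden (R : rcfType) : R := ((1 + Num.sqrt 5) / 2)^-1.

Section InverseGoldenRatio.
Variable R : rcfType.
Local Notation w := (inv_golden R).
Local Notation s := (Num.sqrt (5 : R)).

Lemma sqrt5_facts : 0 <= s /\ s ^+ 2 = 5.
Proof. by rewrite sqrtr_ge0 sqr_sqrtr ?ler0n. Qed.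

Lemma inv_goldenE : w = (s - 1) / 2.
Proof.
have [s_ge0 s2] := sqrt5_facts.
have phi_neq0 : (1 + s) / 2 != 0 by rewrite mulf_neq0 ?invr_eq0 //; lra.
apply: (mulfI phi_neq0); rewrite /inv_golden mulfV //.
have -> : (1 + s) / 2 * ((s - 1) / 2) = (s ^+ 2 - 1) / 4 by field.
by rewrite s2; field.
Qed.

Lemma inv_golden_quadratic : w ^+ 2 + w - 1 = 0.
Proof. by have [_ s2] := sqrt5_facts; rewrite inv_goldenE; nra. Qed.

Lemma inv_golden_bounds : 4079 / 6600 < w <= 5 / 8.
Proof.
by have [s_ge0 s2] := sqrt5_facts; rewrite inv_goldenE; apply/andP; split; nra.
Qed.

End InverseGoldenRatio.

Section KunzPolynomials.
Context {R : realType}.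

Lemma I4_I5_le {a b : R} : 0 <= a -> a <= b -> I4 a <= I4 b /\ I5 a <= I5 b.
Proof.
move=> a_ge0 a_le_b.
have pow_le k : a ^+ k <= b ^+ k.
  by apply: lerXn2r; rewrite // nnegrE (le_trans a_ge0).
by rewrite /I4 /I5; split; repeat apply: lerD; rewrite ?pow_le ?ler_wpM2l.
Qed.

Lemma I4_I5_ge0 {a : R} : 0 <= a -> 0 <= I4 a /\ 0 <= I5 a.
Proof.
move=> a_ge0; have [] := I4_I5_le (lexx 0) a_ge0.
by rewrite /I4 /I5 !expr0n /=; split; lra.
Qed.

Lemma kunz_ratio_le {a b : R} : 0 <= a -> a <= b ->
  I5 a * I4 a ^+ 2 <= I5 b * I4 b ^+ 2.
Proof.
move=> a_ge0 a_le_b; have [I4_le I5_le] := I4_I5_le a_ge0 a_le_b.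
have [I4a_ge0 I5a_ge0] := I4_I5_ge0 a_ge0.
apply: ler_pM; rewrite ?exprn_ge0 //.
by apply: lerXn2r; rewrite // nnegrE (le_trans I4a_ge0).
Qed.

(* Division by w^2 + w - 1: the remainders of I_4 and I_5 I_4^2. *)
Lemma I4_reduce (q : R) : I4 q =
  (q ^+ 2 + q - 1) * (6 - 2 * q + 4 * q ^+ 2 + 2 * q ^+ 3 + 3 * q ^+ 4
                      + q ^+ 5 + q ^+ 6) + (6 - 8 * q).
Proof. by rewrite /I4; ring. Qed.

Lemma kunz_ratio_reduce (q : R) : I5 q * I4 q ^+ 2 =
  (q ^+ 2 + q - 1) *
    (4080 - 2520 * q + 1560 * q ^+ 2 - 960 * q ^+ 3 + 600 * q ^+ 4
     - 360 * q ^+ 5 + 240 * q ^+ 6 - 120 * q ^+ 7 + 120 * q ^+ 8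
     + 120 * q ^+ 10 + 120 * q ^+ 11 + 240 * q ^+ 12 + 324 * q ^+ 13
     + 423 * q ^+ 14 + 455 * q ^+ 15 + 441 * q ^+ 16 + 366 * q ^+ 17
     + 269 * q ^+ 18 + 171 * q ^+ 19 + 95 * q ^+ 20 + 44 * q ^+ 21
     + 17 * q ^+ 22 + 5 * q ^+ 23 + q ^+ 24) + (4080 - 6600 * q).
Proof. by rewrite /I4 /I5; ring. Qed.

Lemma kunz_at_inv_golden : [/\ 0 < inv_golden R,
  I5 (inv_golden R) * I4 (inv_golden R) ^+ 2 < 1 & 1 <= I4 (inv_golden R)].
Proof.
have /andP[w_lo w_hi] := inv_golden_bounds R.
rewrite kunz_ratio_reduce I4_reduce inv_golden_quadratic !mul0r !add0r.
split; lra.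
Qed.

End KunzPolynomials.

Theorem proposition11p4 (R : realType) (rho : R) :
  0 < rho -> 1 - I5 rho * I4 rho ^+ 2 = 0 ->
  [/\ ((1 + Num.sqrt 5) / 2)^-1 < rho,
      (growth_rate R <= (rho^-1)%:E)%E &
      (growth_rate R < ((1 + Num.sqrt 5) / 2)%:E)%E].
Proof.
move=> rho_gt0 root_rho; have [w_gt0 ratio_w I4_w] := kunz_at_inv_golden (R := R).
have w_lt_rho : inv_golden R < rho.
  rewrite ltNge; apply/negP => rho_le_w.
  by have := kunz_ratio_le (ltW rho_gt0) rho_le_w; lra.
have [I4_le _] := I4_I5_le (ltW w_gt0) (ltW w_lt_rho).
have I4_rho : 1 <= I4 rho := le_trans I4_w I4_le.
have growth_le : (growth_rate R <= (rho^-1)%:E)%E.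
  apply: (@limn_esup_root_le _ _ rho) => // g.
  apply: a_count_bound; rewrite ?pair_poly_5_5 ?pair_poly_4_4; [exact: ltW | done | lra].
split => //; apply: le_lt_trans growth_le _.
by rewrite lte_fin -[X in _ < X]invrK ltf_pV2 ?posrE ?invr_gt0.
Qed.
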